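(* For every multiterminal source $X_{\mathcal M}$, $$R_{\mathrm{SK}}\ \ge\ R_{\mathrm{CI}}\ \ge\ \mathrm{CI}(X_{\mathcal M})-\mathbf I(X_{\mathcal M}).$$
   Context: Multiterminal source model. Let $\mathcal M=\{1,\dots,m\}$, $m\ge 2$. Let $X_{\mathcal M}=(X_1,\dots,X_m)$ be jointly distributed random variables on finite alphabets. For $A\subseteq\mathcal M$ write $X_A=(X_i:i\in A)$. For $n\in\mathbb N$, $X^n_{\mathcal M}$ consists of $n$ i.i.d. copies of $X_{\mathcal M}$, and $X_A^n=(X_i^n:i\in A)$. Logarithms are base 2. An interactive communication $\mathbf F$ (depending on $n$) is a finite sequence of transmissions; each transmission is sent by some terminal $i$ and is a deterministic function of $X_i^n$ and the previous transmissions. Its range is the finite set $\mathcal F$. A common randomness (CR) obtained from $\mathbf F$ is a sequence $\mathbf J=\mathbf J^{(n)}$ of functions of $X^n_{\mathcal M}$ such that for every $0<\epsilon<1$ and all sufficiently large $n$ there exist $J_i=J_i(X_i^n,\mathbf F)$, $i\in\mathcal M$, with $\Pr[J_1=\cdots=J_m=\mathbf J]\ge1-\epsilon$. A secret key (SK) obtained from $\mathbf F$ with rate $R$ is a CR $\mathbf K$ obtained from $\mathbf F$ such that for every $\epsilon>0$ and all large $n$, $I(\mathbf K;\mathbf F)\le\epsilon$ and $\frac1nH(\mathbf K)\ge R-\epsilon$. For a partition $\mathcal P$ of $\mathcal M$ with $|\mathcal P|\ge2$ let $\Delta(\mathcal P)=\frac{1}{|\mathcal P|-1}[\sum_{A\in\mathcal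 P}H(X_A)-H(X_{\mathcal M})]$, and let $\mathbf I(X_{\mathcal M})=\min_{\mathcal P}\Delta(\mathcal P)$. This quantity equals the SK capacity, i.e. the supremum of achievable SK rates. $R_{\mathrm{SK}}$ is the infimum of reals $R\ge0$ such that for every $\epsilon>0$ and all sufficiently large $n$ there exist an interactive communication $\mathbf F$ with $\frac1n\log|\mathcal F|\le R+\epsilon$ and an SK $\mathbf K$ obtained from $\mathbf F$ with $\frac1nH(\mathbf K)\ge\mathbf I(X_{\mathcal M})-\epsilon$. For a random variable $\mathbf L$, define $$\mathbf I(X^n_{\mathcal M}|\mathbf L)=\max_{\mathcal P^*}\frac{1}{|\mathcal P^*|-1}\Big[\sum_{A\in\mathcal P^*}H(X^n_A|\mathbf L)-H(X^n_{\mathcal M}|\mathbf L)\Big],$$ the maximum being over the partitions $\mathcal P^*$ minimizing $\Delta$. A Wyner common information ($\mathrm{CI}_W$) is a sequence of finite-valued functions $\mathbf L^{(n)}(X^n_{\mathcal M})$ with $\frac1n\mathbf I(X^n_{\mathcal M}|\mathbf L^{(n)})\to0$. An interactive common information (CI) is a $\mathrm{CI}_W$ of the form $(\mathbf J,\mathbf F)$, where $\mathbf F$ is an interactive communication and $\mathbf J$ is a CR obtained from $\mathbf F$. $R$ is an achievable CI rate if some CI $\mathbf L$ satisfies, for every $\epsilon>0$, $\frac1nH(\mathbf L)\le R+\epsilon$ for all large $n$; $\mathrm{CI}(X_{\mathcal M})$ is the infimum of achievable CI rates. $R_{\mathrm{CI}}$ is the infimum of reals $R\ge0$ such that for every $\epsilon>0$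 and all large $n$ there exist an interactive communication $\mathbf F$ with $\frac1n\log|\mathcal F|\le R+\epsilon$ and a CR $\mathbf J$ such that $(\mathbf J,\mathbf F)$ is a CI. *)

From Stdlib Require Import Reals.
From mathcomp Require Import all_boot.
Set Implicit Arguments. Unset Strict Implicit. Unset Printing Implicit Defensive.
Open Scope R_scope.

Definition log2 (x : R) : R := ln x / ln 2.

Definition Rleb (x y : R) : bool := if Rle_dec x y then true else false.

(* Entropy of a "random variable" on a finite probability space (T, Q),
   represented by the equivalence relation e it induces (w ~ w' iff the
   variable takes the same value at w and w'):
     H = - sum_w Q(w) log2 Q([w]_e)  =  E[-log2 Pr(variable = its value)].
   Terms with Q w = 0 vanish (0 * anything = 0). *)
Definition ent (T : finType) (Q : T -> R) (e : rel T) : R :=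
  - \big[Rplus/0]_(w : T) (Q w * log2 (\big[Rplus/0]_(w' : T | e w w') Q w')).

Definition relf (T : Type) (U : eqType) (g : T -> U) : rel T :=
  fun w w' => g w == g w'.
(* joint random variable (pair) *)
Definition relI (T : Type) (e1 e2 : rel T) : rel T :=
  fun w w' => e1 w w' && e2 w w'.

(* Infima in [-oo,+oo] with inf of the empty set = +oo :
   inf_le A B  <->  inf A <= inf B. *)
Definition inf_le (A B : R -> Prop) : Prop :=
  forall b, B b -> forall eps, 0 < eps -> exists a, A a /\ a <= b + eps.

Section Source.
Variable m : nat.
Variable X : 'I_m -> finType.

Definition Omega : finType := {dffun forall i : 'I_m, X i}.
Variable P : Omega -> R.

Definition OmegaN (n : nat) : finType := {ffun 'I_n -> Omega}.
Definition PN (n : nat) (w : OmegaN n) : R := \big[Rmult/1]_(k < n) P (w k).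
Definition Prob (n : nat) (E : pred (OmegaN n)) : R :=
  \big[Rplus/0]_(w : OmegaN n | E w) PN w.

Definition obs (n : nat) (i : 'I_m) (w : OmegaN n) : {ffun 'I_n -> X i} :=
  [ffun k => w k i].
Definition relA (n : nat) (A : {set 'I_m}) : rel (OmegaN n) :=
  fun w w' => [forall i in A, obs i w == obs i w'].

Definition Hn (n : nat) (e : rel (OmegaN n)) : R := ent (@PN n) e.
Definition condHn (n : nat) (e l : rel (OmegaN n)) : R :=
  Hn (relI e l) - Hn l.
Definition MIn (n : nat) (e1 e2 : rel (OmegaN n)) : R :=
  Hn e1 + Hn e2 - Hn (relI e1 e2).

Definition H1 (A : {set 'I_m}) : R :=
  ent P (fun x y => [forall i in A, x i == y i]).

Definition validp (Q : {set {set 'I_m}}) : bool :=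
  partition Q [set: 'I_m] && (1 < #|Q|)%N.

Definition Delta (Q : {set {set 'I_m}}) : R :=
  / INR (#|Q| - 1)%N * (\big[Rplus/0]_(A in Q) H1 A - H1 [set: 'I_m]).

Definition Pfine : {set {set 'I_m}} := [set [set i] | i in [set: 'I_m]].

Definition Icap : R := \big[Rmin/Delta Pfine]_(Q | validp Q) Delta Q.

Definition minimizer (Q : {set {set 'I_m}}) : bool :=
  validp Q && Rleb (Delta Q) Icap.

(* I(X^n_M | L): max over minimizing partitions P*. The maximum is taken
   with initial value 0, which is harmless since every term is >= 0
   (sum_A H(X_A|L) >= H(X_M|L)) and minimizers exist. *)
Definition condMI (n : nat) (l : rel (OmegaN n)) : R :=
  \big[Rmax/0]_(Q | minimizer Q)
     (/ INR (#|Q| - 1)%N *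
       (\big[Rplus/0]_(A in Q) condHn (@relA n A) l - condHn (@relA n [set: 'I_m]) l)).

(* Interactive communication at blocklength n: a finite sequence of
   transmissions; each is sent by some terminal i and is a deterministic
   function of X_i^n and of the previous transmissions (values encoded in nat). *)
Definition step (n : nat) : Type :=
  {i : 'I_m & ({ffun 'I_n -> X i} -> seq nat -> nat)}.

Fixpoint run (n : nat) (p : seq (step n)) (w : OmegaN n) (acc : seq nat)
  : seq nat :=
  match p with
  | [::] => acc
  | s :: p' => run p' w (rcons acc (projT2 s (obs (projT1 s) w) acc))
  end.

Definition transcript (n : nat) (p : seq (step n)) (w : OmegaN n) : seq nat :=
  run p w [::].

Definition commSize (n : nat) (p : seq (step n)) : nat :=
  size (undup [seq transcript p w | w <- enum (OmegaN n)]).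

Definition Comm : Type := forall n : nat, seq (step n).
Definition RVseq : Type := forall n : nat, OmegaN n -> nat.

Definition isCR (F : Comm) (J : RVseq) : Prop :=
  forall eps, 0 < eps < 1 -> exists N, forall n, (N <= n)%N ->
    exists Ji : forall i : 'I_m, {ffun 'I_n -> X i} -> seq nat -> nat,
      Prob (fun w => [forall i, Ji i (obs i w) (transcript (F n) w) == J n w])
        >= 1 - eps.

Definition isSK (F : Comm) (K : RVseq) (Rt : R) : Prop :=
  isCR F K /\
  forall eps, 0 < eps -> exists N, forall n, (N <= n)%N ->
    MIn (relf (K n)) (relf (transcript (F n))) <= eps /\
    / INR n * Hn (relf (K n)) >= Rt - eps.

Definition Lrel (F : Comm) (J : RVseq) (n : nat) : rel (OmegaN n) :=
  relI (relf (J n)) (relf (transcript (F n))).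

Definition isCIW (L : forall n, rel (OmegaN n)) : Prop :=
  Un_cv (fun n => / INR n * condMI (L n)) 0.

Definition isCI (F : Comm) (J : RVseq) : Prop :=
  isCR F J /\ isCIW (Lrel F J).

Definition rate_le (F : Comm) (Rt : R) : Prop :=
  forall eps, 0 < eps -> exists N, forall n, (N <= n)%N ->
    / INR n * log2 (INR (commSize (F n))) <= Rt + eps.

(* the set whose infimum is R_SK *)
Definition SKcommSet (Rt : R) : Prop :=
  0 <= Rt /\ exists (F : Comm) (K : RVseq), rate_le F Rt /\ isSK F K Icap.

(* the set whose infimum is R_CI *)
Definition CIcommSet (Rt : R) : Prop :=
  0 <= Rt /\ exists (F : Comm) (J : RVseq), rate_le F Rt /\ isCI F J.

(* achievable CI rates; CI(X_M) is the infimum *)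
Definition CIrateSet (Rt : R) : Prop :=
  exists (F : Comm) (J : RVseq), isCI F J /\
    forall eps, 0 < eps -> exists N, forall n, (N <= n)%N ->
      / INR n * Hn (@Lrel F J n) <= Rt + eps.

End Source.

From Pilot Require Import Defs.
From Stdlib Require Import Reals Lra.
From mathcomp Require Import all_boot Rstruct.
Open Scope R_scope.
Set Implicit Arguments. Unset Strict Implicit.

(* For a partition [P] of [M] with [k] blocks and a common randomness [J] obtained
   from an interactive communication [F], let
     [D(L) = sum_(A in P) H(X_A^n | L) - H(X_M^n | L)].
   Interaction does not increase [D], since each transmission is a function of the
   observations of one block and of the past; and as every terminal of a block [A]
   recovers [J], Fano's inequality gives [H(J | X_A^n, F) = o(n)]. Together,
     [D(J, F) + (k - 1) H(J | F) <= n (k - 1) Delta(P) + o(n)],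
   i.e. [D(J, F) / (k - 1) + H(J | F) <= n I(X_M) + o(n)] for a minimizing [P].
   A secret key [K] of rate [I(X_M)] has [H(K | F) >= n I(X_M) - o(n)], so [(K, F)] is
   a CI and [R_SK >= R_CI]. For any CR, [D >= 0] gives
   [H(J, F) <= log |F| + n I(X_M) + o(n)], whence [R_CI >= CI(X_M) - I(X_M)]. *)

Lemma ln2_gt0 : 0 < ln 2.
Proof. have := ln_lt_2; lra. Qed.

Lemma log2_1 : log2 1 = 0.
Proof. by rewrite /log2 ln_1 /Rdiv Rmult_0_l. Qed.

Lemma log2_2 : log2 2 = 1.
Proof. rewrite /log2; field; have := ln2_gt0; lra. Qed.

Lemma log2_mult x y : 0 < x -> 0 < y -> log2 (x * y) = log2 x + log2 y.
Proof. move=> hx hy; rewrite /log2 ln_mult //; field; have := ln2_gt0; lra. Qed.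

Lemma log2_inv x : 0 < x -> log2 (/ x) = - log2 x.
Proof. move=> hx; rewrite /log2 ln_Rinv //; field; have := ln2_gt0; lra. Qed.

Lemma log2_pow x k : 0 < x -> log2 (x ^ k) = INR k * log2 x.
Proof. by move=> hx; rewrite /log2 ln_pow // /Rdiv Rmult_assoc. Qed.

Lemma log2_le x y : 0 < x -> x <= y -> log2 x <= log2 y.
Proof.
move=> hx hxy; apply: Rmult_le_compat_r.
  exact/Rlt_le/Rinv_0_lt_compat/ln2_gt0.
case: (Rle_lt_or_eq_dec _ _ hxy) => [lt_xy|->]; last lra.
exact/Rlt_le/ln_increasing.
Qed.

Lemma log2_ge0 x : 1 <= x -> 0 <= log2 x.
Proof. by move=> h; rewrite -log2_1; apply: log2_le; lra. Qed.

Lemma log2_le_sub1 x : 0 < x -> log2 x <= (x - 1) * / ln 2.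
Proof.
move=> hx; apply: Rmult_le_compat_r; first exact/Rlt_le/Rinv_0_lt_compat/ln2_gt0.
by have := exp_ineq1_le (ln x); rewrite exp_ln //; lra.
Qed.

Lemma log2_prod (I : finType) (F : I -> R) : (forall i, 0 < F i) ->
  log2 (\big[Rmult/1]_(i : I) F i) = \big[Rplus/0]_(i : I) log2 (F i).
Proof.
move=> F_gt0; suff [_ ->] : 0 < \big[Rmult/1]_(i : I) F i /\
   \big[Rplus/0]_(i : I) log2 (F i) = log2 (\big[Rmult/1]_(i : I) F i) by [].
elim/big_rec2: _ => [|i x y _ [y_gt0 ->]]; first by rewrite log2_1; split; lra.
by split; [apply: Rmult_lt_0_compat | rewrite log2_mult].
Qed.

Lemma Rinv_ge0 x : 0 <= x -> 0 <= / x.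
Proof.
case/Rle_lt_or_eq_dec => [x_gt0|<-]; last by rewrite Rinv_0; lra.
exact/Rlt_le/Rinv_0_lt_compat.
Qed.

Lemma INR_gt0 n : (0 < n)%N -> 0 < INR n.
Proof. by move=> /ltP; apply: lt_0_INR. Qed.

Lemma INR_subn1 k : (1 <= k)%N -> INR (k - 1) = INR k - 1.
Proof. by case: k => // k _; rewrite subSS subn0 S_INR; ring. Qed.

Lemma INR_expn a k : INR (a ^ k) = INR a ^ k.
Proof. by elim: k => [|k IH]; rewrite ?expnS ?mult_INR ?IH. Qed.

Section RealSums.
Variable I : Type.
Implicit Types (r : seq I) (p : pred I) (F G : I -> R).

Lemma sum_ge0 r p F : (forall i, p i -> 0 <= F i) ->
  0 <= \big[Rplus/0]_(i <- r | p i) F i.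
Proof. by move=> F_ge0; apply: big_ind => //; [lra | move=> *; lra]. Qed.

Lemma sum_le r p F G : (forall i, p i -> F i <= G i) ->
  \big[Rplus/0]_(i <- r | p i) F i <= \big[Rplus/0]_(i <- r | p i) G i.
Proof. by move=> FG; apply: big_ind2 => //; [lra | move=> *; lra]. Qed.

(* [big_split] and [big_distr*] specialised to [Rplus] and [Rmult]: the generic
   lemmas leave monoid-law projections in the goal that [lra] and [ring] do not see
   through. *)
Lemma sum_add r p F G :
  \big[Rplus/0]_(i <- r | p i) (F i + G i) =
  \big[Rplus/0]_(i <- r | p i) F i + \big[Rplus/0]_(i <- r | p i) G i.
Proof. exact: big_split. Qed.

Lemma sum_mulr r p F c :
  c * \big[Rplus/0]_(i <- r | p i) F i = \big[Rplus/0]_(i <- r | p i) (c * F i).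
Proof. exact: big_distrr. Qed.

Lemma sum_mull r p F c :
  \big[Rplus/0]_(i <- r | p i) F i * c = \big[Rplus/0]_(i <- r | p i) (F i * c).
Proof. exact: big_distrl. Qed.

Lemma sum_minus r p F G :
  \big[Rplus/0]_(i <- r | p i) (F i - G i) =
  \big[Rplus/0]_(i <- r | p i) F i - \big[Rplus/0]_(i <- r | p i) G i.
Proof. by rewrite sum_add -(big_morph _ Ropp_plus_distr Ropp_0). Qed.

Lemma sum_const_seq r c : \big[Rplus/0]_(i <- r) c = INR (size r) * c.
Proof.
elim: r => [|i r IH]; first by rewrite big_nil /=; ring.
rewrite big_cons IH; change (size (i :: r)) with (size r).+1; rewrite S_INR; ring.
Qed.

End RealSums.

Lemma iter_Rplus k c : iter k (Rplus c) 0 = INR k * c.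
Proof. by elim: k => [|k IH]; rewrite ?iterS ?IH ?S_INR /=; ring. Qed.

Lemma sum_const_set (I : finType) (A : {set I}) c :
  \big[Rplus/0]_(i in A) c = INR #|A| * c.
Proof. by rewrite big_const iter_Rplus. Qed.

Lemma sum_const (I : finType) c : \big[Rplus/0]_(i : I) c = INR #|I| * c.
Proof. by rewrite big_const iter_Rplus. Qed.

Lemma sum_le_subset (I : finType) (p p' : pred I) (F : I -> R) :
  (forall i, 0 <= F i) -> subpred p p' ->
  \big[Rplus/0]_(i | p i) F i <= \big[Rplus/0]_(i | p' i) F i.
Proof.
move=> F_ge0 pp'; rewrite [X in _ <= X](bigID p) /=.
rewrite (eq_bigl p) => [|i]; last by case p_i: (p i); rewrite ?andbF ?(pp' i).
by have := @sum_ge0 _ (index_enum I) (fun i => p' i && ~~ p i) F (fun i _ => F_ge0 i); lra.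
Qed.

Lemma sum_by_fibres (I : finType) (U : eqType) (f : I -> U) (s : seq U) (F : I -> R) :
  uniq s -> (forall i, f i \in s) ->
  \big[Rplus/0]_i F i = \big[Rplus/0]_(y <- s) \big[Rplus/0]_(i | f i == y) F i.
Proof.
move=> s_uniq f_in; rewrite [RHS](exchange_big_dep predT) //=; apply: eq_bigr => i _.
rewrite big_mkcond (bigD1_seq (f i)) //= eqxx big1 /= => [|y]; first ring.
by rewrite eq_sym => /negbTE ->.
Qed.

(** * Entropy of equivalence relations on a finite probability space *)

Definition is_equiv (T : Type) (e : rel T) := [/\ reflexive e, symmetric e & transitive e].

Lemma is_equivI (T : Type) (a b : rel T) :
  is_equiv a -> is_equiv b -> is_equiv (relI a b).
Proof.
case=> ra sa ta [rb sb tb]; split => [x|x y|y x z]; rewrite /relI.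
- by rewrite ra rb.
- by rewrite sa sb.
- by case/andP => xya xyb /andP [yza yzb]; rewrite (ta _ _ _ xya yza) (tb _ _ _ xyb yzb).
Qed.

Lemma is_equiv_relf (T : Type) (U : eqType) (f : T -> U) : is_equiv (relf f).
Proof.
by split => [x|x y|y x z]; rewrite /relf // => /eqP -> /eqP ->.
Qed.

Lemma is_equiv_class (T : Type) (e : rel T) u w w' :
  is_equiv e -> e u w -> e u w' -> e w w'.
Proof. by case=> _ se te uw; apply: te; rewrite se. Qed.

Section Entropy.
Variables (T : finType) (Q : T -> R).
Hypothesis Q_ge0 : forall w, 0 <= Q w.
Implicit Types (e a b c : rel T) (w u v : T).

Definition pclass e w : R := \big[Rplus/0]_(w' | e w w') Q w'.

Lemma entE e : ent Q e = - \big[Rplus/0]_w (Q w * log2 (pclass e w)).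
Proof. by []. Qed.

Lemma pclass_ge0 e w : 0 <= pclass e w.
Proof. exact: sum_ge0. Qed.

Lemma pclass_ge e w : e w w -> Q w <= pclass e w.
Proof.
move=> eww; rewrite /pclass (bigD1 w) //=.
by have := @sum_ge0 _ (index_enum T) (fun i => e w i && (i != w)) Q (fun i _ => Q_ge0 i); lra.
Qed.

Lemma pclass_gt0 e w : e w w -> 0 < Q w -> 0 < pclass e w.
Proof. by move=> /pclass_ge; lra. Qed.

Lemma pclass_eq e w u : is_equiv e -> e w u -> pclass e w = pclass e u.
Proof.
case=> _ se te ewu; apply: eq_bigl => w'; apply/idP/idP; last exact: te.
by apply: te; rewrite se.
Qed.

Lemma ent_ext e e' : e =2 e' -> ent Q e = ent Q e'.
Proof.
by move=> ee'; congr (- _); apply: eq_bigr => w _; rewrite /pclass (eq_bigl _ _ (ee' w)).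
Qed.

Lemma ent_le_subrel e e' : reflexive e -> subrel e e' -> ent Q e' <= ent Q e.
Proof.
move=> re ee'; apply: Ropp_le_contravar; apply: sum_le => w _.
case: (Rle_lt_or_eq_dec _ _ (Q_ge0 w)) => [Qw_gt0|<-]; last lra.
apply: Rmult_le_compat_l; first lra.
apply: log2_le; first exact: (pclass_gt0 (re w)).
exact: sum_le_subset (ee' w).
Qed.

Lemma gibbs_ineq (x : T -> R) : (forall w, 0 < Q w -> 0 < x w) ->
  \big[Rplus/0]_w (Q w * x w) <= \big[Rplus/0]_w Q w ->
  \big[Rplus/0]_w (Q w * log2 (x w)) <= 0.
Proof.
move=> x_gt0 sum_le_mass.
apply: (Rle_trans _ (\big[Rplus/0]_w (Q w * x w - Q w) * / ln 2)).
  rewrite sum_mull; apply: sum_le => w _.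
  case: (Rle_lt_or_eq_dec _ _ (Q_ge0 w)) => [Qw_gt0|<-]; last lra.
  have := log2_le_sub1 (x_gt0 w Qw_gt0).
  have -> : (Q w * x w - Q w) * / ln 2 = Q w * ((x w - 1) * / ln 2) by ring.
  by move=> h; apply: Rmult_le_compat_l; lra.
rewrite sum_minus; have := Rinv_0_lt_compat _ ln2_gt0; nra.
Qed.

Lemma sum_pclass_exchange (p : pred T) e (G : T -> R) : symmetric e ->
  \big[Rplus/0]_(w | p w) (G w * pclass e w) =
  \big[Rplus/0]_u (Q u * \big[Rplus/0]_(w | p w && e u w) G w).
Proof.
move=> se; under eq_bigr do rewrite /pclass sum_mulr.
rewrite (exchange_big_dep predT) //=; apply: eq_bigr => u _.
rewrite sum_mulr; apply: eq_big => [w|w _]; first by rewrite se.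
exact: Rmult_comm.
Qed.

Lemma sum_ratio_in_class_le1 (S : pred T) e :
  (forall w w', S w -> S w' -> e w w') ->
  \big[Rplus/0]_(w | S w) (Q w * / pclass e w) <= 1.
Proof.
move=> S_class; set s := \big[Rplus/0]_(w | S w) Q w.
apply: (Rle_trans _ (\big[Rplus/0]_(w | S w) (Q w * / s))).
  apply: sum_le => w Sw.
  case: (Rle_lt_or_eq_dec _ _ (Q_ge0 w)) => [Qw_gt0|<-]; last lra.
  have Qw_le_s : Q w <= s by rewrite /s (bigD1 w) //=; have := @sum_ge0 _ (index_enum T)
    (fun i => S i && (i != w)) Q (fun i _ => Q_ge0 i); lra.
  have s_le_class : s <= pclass e w by apply: sum_le_subset => // w'; apply: S_class.
  by apply: Rmult_le_compat_l; [lra | apply: Rinv_le_contravar; lra].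
rewrite -sum_mull -/s.
have : 0 <= s by exact: sum_ge0.
case/Rle_lt_or_eq_dec => [s_gt0|<-].
  by rewrite Rinv_r; lra.
by rewrite Rmult_0_l; lra.
Qed.

Lemma ratio_le1 e w : e w w -> Q w * / pclass e w <= 1.
Proof.
move=> eww; case: (Rle_lt_or_eq_dec _ _ (Q_ge0 w)) => [Qw_gt0|<-]; last lra.
have := pclass_ge eww => Qw_le; rewrite -(Rinv_r (pclass e w)); last lra.
by apply: Rmult_le_compat_r => //; apply/Rinv_ge0/pclass_ge0.
Qed.

Section Submodularity.
Variables a b c : rel T.
Hypotheses (ea : is_equiv a) (eb : is_equiv b) (ec : is_equiv c).
Let ac := relI a c.
Let bc := relI b c.
Let abc := relI (relI a b) c.

Lemma sum_ratio_in_joint_class u v :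
  \big[Rplus/0]_(w | ac u w && bc v w) (Q w * / pclass abc w) <= if c u v then 1 else 0.
Proof.
have [_ sc tc] := ec.
case cuv: (c u v).
  apply: sum_ratio_in_class_le1 => w w' /andP [/andP [uwa uwc] /andP [vwb vwc]].
  move=> /andP [/andP [uw'a uw'c] /andP [vw'b vw'c]].
  by rewrite /abc /relI (is_equiv_class ea uwa uw'a) (is_equiv_class eb vwb vw'b)
    (is_equiv_class ec uwc uw'c).
rewrite big_pred0 => [|w]; first lra.
apply/negP => /andP [/andP [_ uwc] /andP [_ vwc]].
by move: cuv; rewrite (tc w) // sc.
Qed.

Lemma submod_weights :
  \big[Rplus/0]_w (Q w * (pclass ac w * pclass bc w * / (pclass abc w * pclass c w)))
  <= \big[Rplus/0]_w Q w.
Proof.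
have [_ sc tc] := ec.
have sac : symmetric ac by have [] := is_equivI ea ec.
have sbc : symmetric bc by have [] := is_equivI eb ec.
transitivity (\big[Rplus/0]_w
    (Q w * pclass bc w * / (pclass abc w * pclass c w) * pclass ac w)).
  by apply: Req_le; apply: eq_bigr => w _; ring.
rewrite (sum_pclass_exchange _ _ sac) /=.
apply: sum_le => u _; rewrite -[X in _ <= X]Rmult_1_r.
apply: Rmult_le_compat_l => //.
transitivity (/ pclass c u * \big[Rplus/0]_(w | ac u w) (Q w * / pclass abc w * pclass bc w)).
  rewrite sum_mulr; apply: Req_le; apply: eq_bigr => w /andP [_ uwc].
  have cwu : c w u by rewrite sc.
  by rewrite (pclass_eq ec cwu) Rinv_mult; ring.
rewrite (sum_pclass_exchange _ _ sbc).
have qcu_ge0 := pclass_ge0 c u.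
apply: (Rle_trans _ (/ pclass c u * pclass c u)).
  apply: Rmult_le_compat_l; first exact: Rinv_ge0.
  have -> : pclass c u = \big[Rplus/0]_v (Q v * (if c u v then 1 else 0)).
    by rewrite /pclass big_mkcond; apply: eq_bigr => v _; case: (c u v); ring.
  apply: sum_le => v _.
  have := sum_ratio_in_joint_class u v.
  by case: (c u v) => h; apply: Rmult_le_compat_l (Q_ge0 v) h.
case: (Rle_lt_or_eq_dec _ _ qcu_ge0) => [qcu_gt0|<-]; last by rewrite Rmult_0_r; lra.
by rewrite Rinv_l; lra.
Qed.

Lemma ent_submod : ent Q abc + ent Q c <= ent Q ac + ent Q bc.
Proof.
have pos e w : is_equiv e -> 0 < Q w -> 0 < pclass e w by case=> re _ _; apply: pclass_gt0.
have eac := is_equivI ea ec; have ebc := is_equivI eb ec.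
have eabc := is_equivI (is_equivI ea eb) ec.
have ratio_gt0 w : 0 < Q w ->
    0 < pclass ac w * pclass bc w * / (pclass abc w * pclass c w).
  move=> Qw_gt0; apply: Rmult_lt_0_compat; first by apply: Rmult_lt_0_compat; apply: pos.
  by apply: Rinv_0_lt_compat; apply: Rmult_lt_0_compat; apply: pos.
have := gibbs_ineq ratio_gt0 submod_weights.
have -> : \big[Rplus/0]_w
    (Q w * log2 (pclass ac w * pclass bc w * / (pclass abc w * pclass c w))) =
  \big[Rplus/0]_w (Q w * log2 (pclass ac w) + Q w * log2 (pclass bc w)
    - (Q w * log2 (pclass abc w) + Q w * log2 (pclass c w))).
  apply: eq_bigr => w _; case: (Rle_lt_or_eq_dec _ _ (Q_ge0 w)) => [Qw_gt0|<-]; last ring.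
  have := pos _ _ eac Qw_gt0; have := pos _ _ ebc Qw_gt0.
  have := pos _ _ eabc Qw_gt0; have := pos _ _ ec Qw_gt0 => h1 h2 h3 h4.
  rewrite log2_mult ?log2_inv ?log2_mult; try by repeat apply: Rmult_lt_0_compat.
  - ring.
  - by apply: Rinv_0_lt_compat; apply: Rmult_lt_0_compat.
by rewrite sum_minus !sum_add !entE; lra.
Qed.

End Submodularity.

Lemma cond_ent_le_subrel a b c : is_equiv a -> is_equiv b -> is_equiv c -> subrel b c ->
  ent Q (relI a b) - ent Q b <= ent Q (relI a c) - ent Q c.
Proof.
move=> ea eb ec bc; have := ent_submod ea eb ec.
rewrite (@ent_ext (relI (relI a b) c) (relI a b)); last first.
  by move=> w w'; rewrite /relI; case: (b w w') (bc w w') => [->|]; rewrite ?andbF ?andbT.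
rewrite (@ent_ext (relI b c) b); last first.
  by move=> w w'; rewrite /relI; case: (b w w') (bc w w') => // ->.
lra.
Qed.

Section Fano.
Variables (U : eqType) (J Jh : T -> U) (g : rel T).
Hypotheses (eg : is_equiv g) (Jh_g : forall w w', g w w' -> Jh w = Jh w').
Let jg := relI (relf J) g.
Let N := INR #|T|.
(* A guess for [J] given the [g]-class: 1/2 on the decoded value, 1/(2N) elsewhere. *)
Let guess w := if J w == Jh w then / 2 else / (2 * N).

Let N_gt0 (w : T) : 0 < N.
Proof. by apply/INR_gt0/card_gt0P; exists w. Qed.

Let guess_gt0 w : 0 < guess w.
Proof. by rewrite /guess; have := N_gt0 w; case: (_ == _) => ?; apply: Rinv_0_lt_compat; lra. Qed.

Lemma fano_weights :
  \big[Rplus/0]_w (Q w * (pclass g w * guess w * / pclass jg w)) <= \big[Rplus/0]_w Q w.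
Proof.
have [_ sg _] := eg; have [rjg _ _] := is_equivI (is_equiv_relf J) eg.
transitivity (\big[Rplus/0]_w (Q w * guess w * / pclass jg w * pclass g w)).
  by apply: Req_le; apply: eq_bigr => w _; ring.
rewrite (sum_pclass_exchange _ _ sg) /=.
apply: sum_le => u _; rewrite -[X in _ <= X]Rmult_1_r.
apply: Rmult_le_compat_l => //; have N0 := N_gt0 u.
transitivity (/ 2 * \big[Rplus/0]_(w | g u w && (J w == Jh u)) (Q w * / pclass jg w)
    + \big[Rplus/0]_(w | g u w) / (2 * N)).
  rewrite sum_mulr big_mkcondr -sum_add; apply: sum_le => w guw.
  have ratio_ge0 : 0 <= Q w * / pclass jg w.
    by apply: Rmult_le_pos => //; apply/Rinv_ge0/pclass_ge0.
  have := ratio_le1 (rjg w); rewrite -/jg /guess -(Jh_g guw).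
  have := Rinv_0_lt_compat _ (Rmult_lt_0_compat _ _ Rlt_0_2 N0).
  by case: (J w == Jh u) => ? ?; nra.
have in_class : \big[Rplus/0]_(w | g u w && (J w == Jh u)) (Q w * / pclass jg w) <= 1.
  apply: sum_ratio_in_class_le1 => w w' /andP [guw /eqP Jw] /andP [guw' /eqP Jw'].
  by rewrite /jg /relI /relf Jw Jw' eqxx (is_equiv_class eg guw guw').
have spread : \big[Rplus/0]_(w | g u w) / (2 * N) <= / 2.
  apply: (Rle_trans _ (\big[Rplus/0]_(w : T) / (2 * N))).
    by apply: sum_le_subset => // w; apply/Rlt_le/Rinv_0_lt_compat; lra.
  by rewrite sum_const -/N; apply: Req_le; field; lra.
lra.
Qed.

Lemma fano_ineq :
  ent Q (relI (relf J) g) - ent Q g <=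
  \big[Rplus/0]_w (Q w * (if J w == Jh w then 1 else log2 (2 * INR #|T|))).
Proof.
have [rg _ _] := eg; have [rjg _ _] := is_equivI (is_equiv_relf J) eg.
have ratio_gt0 w : 0 < Q w -> 0 < pclass g w * guess w * / pclass jg w.
  move=> Qw_gt0; apply: Rmult_lt_0_compat; last exact/Rinv_0_lt_compat/(pclass_gt0 (rjg w)).
  exact: Rmult_lt_0_compat (pclass_gt0 (rg w) Qw_gt0) (guess_gt0 w).
have := gibbs_ineq ratio_gt0 fano_weights.
have -> : \big[Rplus/0]_w (Q w * log2 (pclass g w * guess w * / pclass jg w)) =
    \big[Rplus/0]_w (Q w * log2 (pclass g w) - Q w * log2 (pclass jg w)
      - Q w * (if J w == Jh w then 1 else log2 (2 * N))).
  apply: eq_bigr => w _; case: (Rle_lt_or_eq_dec _ _ (Q_ge0 w)) => [Qw_gt0|<-]; last ring.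
  have log2_guess : log2 (guess w) = - (if J w == Jh w then 1 else log2 (2 * N)).
    rewrite /guess; have := N_gt0 w; case: (_ == _) => ?; rewrite log2_inv ?log2_2 //; lra.
  have qg_gt0 := pclass_gt0 (rg w) Qw_gt0; have qjg_gt0 := pclass_gt0 (rjg w) Qw_gt0.
  rewrite (log2_mult (Rmult_lt_0_compat _ _ qg_gt0 (guess_gt0 w)) (Rinv_0_lt_compat _ qjg_gt0)).
  by rewrite (log2_mult qg_gt0 (guess_gt0 w)) (log2_inv qjg_gt0) log2_guess -/jg; ring.
by rewrite !sum_minus !entE -/jg -/N; lra.
Qed.

End Fano.

Lemma ent_le_log2_card (U : eqType) (f : T -> U) : \big[Rplus/0]_w Q w = 1 ->
  ent Q (relf f) <= log2 (INR (size (undup [seq f w | w <- enum T]))).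
Proof.
move=> Q_sum1; set Us := undup _; set N := INR (size Us).
have f_in w : f w \in Us by rewrite mem_undup map_f ?mem_enum.
have [w0 _ | T0] := pickP (@predT T); last by move: Q_sum1; rewrite big_pred0 //; lra.
have N_gt0 : 0 < N by apply: INR_gt0; have := f_in w0; case: (Us).
have [rf _ _] := is_equiv_relf f.
pose x w := / (N * pclass (relf f) w).
have x_gt0 w : 0 < Q w -> 0 < x w.
  by move=> Qw_gt0; apply/Rinv_0_lt_compat/Rmult_lt_0_compat => //; apply: pclass_gt0.
have weights : \big[Rplus/0]_w (Q w * x w) <= \big[Rplus/0]_w Q w.
  transitivity (/ N * \big[Rplus/0]_w (Q w * / pclass (relf f) w)).
    rewrite sum_mulr; apply: Req_le; apply: eq_bigr => w _.
    rewrite /x Rinv_mult; ring.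
  rewrite Q_sum1 (sum_by_fibres _ (undup_uniq _) f_in).
  apply: (Rle_trans _ (/ N * \big[Rplus/0]_(y <- Us) 1)).
    apply: Rmult_le_compat_l; first exact/Rlt_le/Rinv_0_lt_compat.
    apply: sum_le => y _; apply: sum_ratio_in_class_le1 => w w' /eqP fw /eqP fw'.
    by rewrite /relf fw fw'.
  by rewrite sum_const_seq -/N Rmult_1_r Rinv_l; lra.
have := gibbs_ineq x_gt0 weights.
have -> : \big[Rplus/0]_w (Q w * log2 (x w)) =
    \big[Rplus/0]_w (- (Q w * log2 (pclass (relf f) w)) - Q w * log2 N).
  apply: eq_bigr => w _; case: (Rle_lt_or_eq_dec _ _ (Q_ge0 w)) => [Qw_gt0|<-]; last ring.
  have q_gt0 := pclass_gt0 (rf w) Qw_gt0.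
  by rewrite /x log2_inv ?log2_mult //; [ring | apply: Rmult_lt_0_compat].
rewrite sum_minus -sum_mull Q_sum1 -(big_morph _ Ropp_plus_distr Ropp_0) -entE.
lra.
Qed.

End Entropy.

(** * Memoryless sources *)

Section Memoryless.
Variables (m : nat) (X : 'I_m -> finType) (P : Omega X -> R).
Hypotheses (P_ge0 : forall x, 0 <= P x) (P_sum1 : \big[Rplus/0]_x P x = 1).
Variable n : nat.
Local Notation T := (OmegaN X n).
Local Notation Q := (@PN m X P n).

Lemma PN_ge0 w : 0 <= Q w.
Proof. by rewrite /PN; elim/big_ind: _ => //; [lra | move=> *; apply: Rmult_le_pos]. Qed.

Lemma PN_sum1 : \big[Rplus/0]_(w : T) Q w = 1.
Proof.
rewrite /PN -(bigA_distr_bigA (fun (k : 'I_n) (x : Omega X) => P x)).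
by rewrite big1 // => k _; exact: P_sum1.
Qed.

Lemma PN_gt0_coord (w : T) k : 0 < Q w -> 0 < P (w k).
Proof.
case: (Rle_lt_or_eq_dec _ _ (P_ge0 (w k))) => // Pwk0.
by rewrite /PN (bigD1 k) //= -Pwk0 Rmult_0_l; lra.
Qed.

Lemma sum_PN_coord k (G : Omega X -> R) :
  \big[Rplus/0]_(w : T) (Q w * G (w k)) = \big[Rplus/0]_x (P x * G x).
Proof.
pose F (j : 'I_n) (x : Omega X) := if j == k then P x * G x else P x.
transitivity (\big[Rplus/0]_(w : T) \big[Rmult/1]_(j : 'I_n) F j (w j)).
  apply: eq_bigr => w _; rewrite /PN (bigD1 k) //= [in RHS](bigD1 k) //= /F eqxx.
  rewrite [in RHS](eq_bigr (fun j => P (w j))) => [|j /negbTE -> //].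
  by rewrite !Rmult_assoc [G _ * _]Rmult_comm.
rewrite -(bigA_distr_bigA F) (bigD1 k) //= /F eqxx.
by rewrite [X in _ * X = _]big1 ?Rmult_1_r // => j /negbTE ->.
Qed.

Definition eqA (A : {set 'I_m}) : rel (Omega X) := fun x y => [forall i in A, x i == y i].

Lemma relA_coord A (w w' : T) : relA A w w' = [forall k, eqA A (w k) (w' k)].
Proof.
apply/forall_inP/forallP => [h k | h i iA].
  by apply/forall_inP => i iA; have /eqP/ffunP/(_ k) := h i iA; rewrite !ffunE => ->.
by apply/eqP/ffunP => k; rewrite !ffunE; have /forall_inP/(_ i iA)/eqP := h k.
Qed.

Lemma pclass_relA A (w : T) :
  pclass Q (relA A) w = \big[Rmult/1]_(k : 'I_n) pclass P (eqA A) (w k).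
Proof.
rewrite /pclass (bigA_distr_big_dep (fun k => eqA A (w k)) (fun _ y => P y)).
by apply: eq_bigl => w'; rewrite relA_coord; apply/forallP/familyP.
Qed.

Lemma Hn_relA A : Hn P (@relA m X n A) = INR n * H1 P A.
Proof.
have eqA_refl : reflexive (eqA A) by move=> x; apply/forall_inP.
rewrite /Hn /H1 !entE.
transitivity (- \big[Rplus/0]_(k : 'I_n) \big[Rplus/0]_(w : T)
    (Q w * log2 (pclass P (eqA A) (w k)))).
  congr (- _); rewrite exchange_big /=; apply: eq_bigr => w _; rewrite -sum_mulr.
  case: (Rle_lt_or_eq_dec _ _ (PN_ge0 w)) => [Qw_gt0|<-]; last by rewrite !Rmult_0_l.
  rewrite pclass_relA log2_prod // => k.
  exact/(pclass_gt0 P_ge0 (eqA_refl _))/PN_gt0_coord.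
rewrite (eq_bigr _ (fun k _ => sum_PN_coord k (fun x => log2 (pclass P (eqA A) x)))).
by rewrite sum_const card_ord /eqA; ring.
Qed.

Lemma ent_total : Hn P (fun _ _ : T => true) = 0.
Proof.
rewrite /Hn entE big1 ?Ropp_0 // => w _.
by rewrite /pclass PN_sum1 log2_1 Rmult_0_r.
Qed.

End Memoryless.

(** * The excess of a partition *)

Section ConditionalExcess.
Variables (m : nat) (X : 'I_m -> finType) (P : Omega X -> R).
Hypotheses (P_ge0 : forall x, 0 <= P x) (P_sum1 : \big[Rplus/0]_x P x = 1).
Variable n : nat.
Local Notation T := (OmegaN X n).
Local Notation Q := (@PN m X P n).
Local Notation H := (@Hn m X P n).
Local Notation xA := (@relA m X n).
Let Q_ge0 := PN_ge0 P_ge0 (n := n).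
Implicit Types (l s j f : rel T) (A B : {set 'I_m}).

Lemma condHnE A l : condHn P (xA A) l = H (relI (xA A) l) - H l.
Proof. by []. Qed.

Lemma is_equiv_relA A : is_equiv (xA A).
Proof.
split => [w|w w'|w' w w''].
- exact/forall_inP.
- by apply/forall_inP/forall_inP => h i /h; rewrite eq_sym.
- move=> /forall_inP h1 /forall_inP h2; apply/forall_inP => i iA.
  by rewrite (eqP (h1 i iA)) h2.
Qed.

Lemma relA_subset A B : A \subset B -> subrel (xA B) (xA A).
Proof. by move=> AB w w' /forall_inP h; apply/forall_inP => i /(subsetP AB)/h. Qed.

Lemma relA_obs A i (w w' : T) : i \in A -> xA A w w' -> obs i w = obs i w'.
Proof. by move=> iA /forall_inP /(_ i iA) /eqP. Qed.

Variable Pi : {set {set 'I_m}}.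

(* [condMI] maximises [excess Pi l / (|Pi| - 1)] over the minimizing partitions [Pi]. *)
Definition excess l : R :=
  \big[Rplus/0]_(A in Pi) condHn P (xA A) l - condHn P (xA [set: 'I_m]) l.

Lemma excess_ext l l' : l =2 l' -> excess l = excess l'.
Proof.
move=> ll'; rewrite /excess /condHn /Hn (ent_ext _ ll').
have eA A : ent Q (relI (xA A) l) = ent Q (relI (xA A) l').
  by apply: ent_ext => w w'; rewrite /relI ll'.
by rewrite eA; congr (_ - _); apply: eq_bigr => A _; rewrite eA.
Qed.

Lemma excess_total :
  excess (fun _ _ => true) = INR n * (\big[Rplus/0]_(A in Pi) H1 P A - H1 P [set: 'I_m]).
Proof.
have cA A : condHn P (xA A) (fun _ _ => true) = INR n * H1 P A.
  rewrite /condHn ent_total // Rminus_0_r -(Hn_relA P_ge0 P_sum1).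
  by apply: ent_ext => w w'; rewrite /relI andbT.
by rewrite /excess cA (eq_bigr _ (fun A _ => cA A)) Rmult_minus_distr_l sum_mulr.
Qed.

(* The terms of [B] and of [[set: 'I_m]] do not change, as [s] is determined by
   [l] and [X_B]; all other terms can only decrease. *)
Lemma excess_refine l s B : is_equiv l -> is_equiv s -> B \in Pi ->
  (forall w w', xA B w w' -> l w w' -> s w w') -> excess (relI l s) <= excess l.
Proof.
move=> el es BPi Bls.
have els := is_equivI el es.
have cA A : condHn P (xA A) (relI l s) <= condHn P (xA A) l.
  apply: (cond_ent_le_subrel Q_ge0 (is_equiv_relA A) els el).
  by move=> w w' /andP [].
have cB A : B \subset A ->
    condHn P (xA A) (relI l s) = H (relI (xA A) l) - H (relI l s).
  move=> BA; rewrite /condHn /Hn; congr (_ - _); apply: ent_ext => w w'.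
  rewrite /relI; case Aww': (xA A w w'); case: (l w w') (Bls w w') => //=.
  by move=> ->; rewrite // (relA_subset BA Aww').
rewrite /excess (bigD1 B) // [X in _ <= X - _](bigD1 B) //=.
rewrite (cB _ (subxx B)) (cB _ (subsetT B)).
have := @sum_le _ (index_enum _) (fun A => (A \in Pi) && (A != B)) _ _ (fun A _ => cA A).
rewrite /condHn.
set S1 := \big[Rplus/0]_(A in Pi | A != B) (H (relI (xA A) (relI l s)) - _).
set S2 := \big[Rplus/0]_(A in Pi | A != B) (H (relI (xA A) l) - _).
lra.
Qed.

Lemma excess_join j f : is_equiv j -> is_equiv f ->
  excess (relI j f) <= excess f +
    \big[Rplus/0]_(A in Pi) (H (relI (xA A) (relI j f)) - H (relI (xA A) f))
    - (INR #|Pi| - 1) * (H (relI j f) - H f).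
Proof.
move=> ej ef.
have total_le : H (relI (xA [set: 'I_m]) f) <= H (relI (xA [set: 'I_m]) (relI j f)).
  apply: (ent_le_subrel Q_ge0); last by move=> w w'; rewrite /relI => /andP [-> /andP [_ ->]].
  by have [] := is_equivI (is_equiv_relA [set: 'I_m]) (is_equivI ej ef).
have cA A : condHn P (xA A) (relI j f) = condHn P (xA A) f
    + (H (relI (xA A) (relI j f)) - H (relI (xA A) f)) - (H (relI j f) - H f).
  by rewrite !condHnE; ring.
rewrite /excess (eq_bigr _ (fun A _ => cA A)) cA sum_minus sum_add sum_const_set.
set k := INR #|Pi|; set cond_f := \big[Rplus/0]_(A in Pi) condHn _ _ _.
set gain := \big[Rplus/0]_(A in Pi) (H (relI (xA A) (relI j f)) - _).
by move: total_le; rewrite !condHnE; lra.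
Qed.

Hypothesis Pi_cover : forall i, exists2 B, B \in Pi & i \in B.

Lemma excess_run (p : seq (step X n)) (acc : T -> seq nat) :
  excess (relf (fun w => run p w (acc w))) <= excess (relf acc).
Proof.
elim: p acc => [|st p IH] acc /=; first exact: Rle_refl.
apply: (Rle_trans _ _ _ (IH _)).
pose sf w := projT2 st (obs (projT1 st) w) (acc w).
rewrite (@excess_ext _ (relI (relf acc) (relf sf))); last first.
  by move=> w w'; rewrite /relf /relI eqseq_rcons.
have [B BPi iB] := Pi_cover (projT1 st).
apply: (excess_refine (B := B)) => //; try exact: is_equiv_relf.
by move=> w w' Bww' /eqP acc_ww'; rewrite /relf /sf acc_ww' (relA_obs iB Bww').
Qed.

Lemma excess_transcript (p : seq (step X n)) :
  excess (relf (transcript p)) <= excess (fun _ _ => true).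
Proof.
have := excess_run p (fun _ => [::]).
by rewrite (@excess_ext (relf (fun _ : T => [::])) (fun _ _ => true)) // => w w'; rewrite /relf.
Qed.

Definition relA_all (As : seq {set 'I_m}) : rel T := fun w w' => all (fun A => xA A w w') As.

Lemma is_equiv_relA_all As : is_equiv (relA_all As).
Proof.
split => [w|w w'|w' w w'']; rewrite /relA_all.
- by apply/allP => A _; have [] := is_equiv_relA A.
- by apply/allP/allP => h A /h; have [_ -> _] := is_equiv_relA A.
- move=> /allP h1 /allP h2; apply/allP => A sA; have [_ _ tA] := is_equiv_relA A.
  exact: tA (h1 A sA) (h2 A sA).
Qed.

Lemma excess_ge0 l : is_equiv l -> 0 <= excess l.
Proof.
move=> el.
have subadd As : H (relI (relA_all As) l) - H l <= \big[Rplus/0]_(A <- As) condHn P (xA A) l.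
  elim: As => [|A As IH].
    by rewrite big_nil /Hn (@ent_ext _ _ (relI (relA_all [::]) l) l) //; lra.
  rewrite big_cons; have := ent_submod Q_ge0 (is_equiv_relA A) (is_equiv_relA_all As) el.
  rewrite (@ent_ext _ _ (relI (relI (xA A) (relA_all As)) l) (relI (relA_all (A :: As)) l)) //.
  by move: IH; rewrite /condHn /Hn; lra.
have := subadd (enum Pi); rewrite big_enum /excess /condHn.
have : H (relI (xA [set: 'I_m]) l) <= H (relI (relA_all (enum Pi)) l).
  apply: (ent_le_subrel Q_ge0).
    by have [] := is_equivI (is_equiv_relA_all (enum Pi)) el.
  move=> w w' /andP [all_ww' lww']; rewrite /relI lww' andbT; apply/forall_inP => i _.
  have [B BPi iB] := Pi_cover i; move/allP: all_ww' => /(_ B); rewrite mem_enum.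
  by move=> /(_ BPi) Bww'; rewrite (relA_obs iB Bww').
set S := \big[Rplus/0]_(A in Pi) _.
lra.
Qed.

End ConditionalExcess.

Section CommonRandomnessBound.
Variables (m : nat) (X : 'I_m -> finType) (P : Omega X -> R).
Hypotheses (P_ge0 : forall x, 0 <= P x) (P_sum1 : \big[Rplus/0]_x P x = 1).

Definition log2_card_Omega : R := log2 (INR #|Omega X|).

Lemma card_Omega_gt0 : (0 < #|Omega X|)%N.
Proof.
apply/card_gt0P; case: (pickP (@predT (Omega X))) => [x _|Omega0]; first by exists x.
by move: P_sum1; rewrite big_pred0 //; lra.
Qed.

Lemma log2_card_Omega_ge0 : 0 <= log2_card_Omega.
Proof. exact/log2_ge0/(le_INR 1)/leP/card_Omega_gt0. Qed.

Variable n : nat.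
Local Notation T := (OmegaN X n).
Local Notation Q := (@PN m X P n).
Local Notation H := (@Hn m X P n).
Local Notation c := log2_card_Omega.
Let Q_ge0 := PN_ge0 P_ge0 (n := n).

Lemma log2_card_OmegaN : log2 (INR #|T|) = INR n * c.
Proof. by rewrite card_ffun card_ord INR_expn log2_pow //; apply/INR_gt0/card_Omega_gt0. Qed.

Lemma decoding_cost_le (U : eqType) (J Jh : T -> U) (E : pred T) (delta : R) :
  (forall w, E w -> J w = Jh w) -> Prob P E >= 1 - delta ->
  \big[Rplus/0]_(w : T) (Q w * (if J w == Jh w then 1 else log2 (2 * INR #|T|)))
   <= 1 + delta * (INR n * c).
Proof.
move=> EJ probE.
have nc_ge0 : 0 <= INR n * c by apply: Rmult_le_pos; [apply: pos_INR | apply: log2_card_Omega_ge0].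
have log2_2T : log2 (2 * INR #|T|) = 1 + INR n * c.
  rewrite log2_mult ?log2_2 ?log2_card_OmegaN //; first lra.
  by apply/INR_gt0; rewrite card_ffun card_ord expn_gt0 card_Omega_gt0.
have errors : \big[Rplus/0]_(w | J w != Jh w) Q w <= delta.
  have : \big[Rplus/0]_(w : T) Q w = Prob P E + \big[Rplus/0]_(w | ~~ E w) Q w by apply: bigID.
  have : \big[Rplus/0]_(w | J w != Jh w) Q w <= \big[Rplus/0]_(w | ~~ E w) Q w.
    by apply: sum_le_subset => // w; apply: contra => /EJ ->.
  by rewrite (PN_sum1 P_sum1); lra.
transitivity (\big[Rplus/0]_(w : T) Q w + \big[Rplus/0]_(w | J w != Jh w) Q w * (INR n * c)).
  rewrite (big_mkcond (fun w => J w != Jh w)) sum_mull -sum_add.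
  apply: Req_le; apply: eq_bigr => w _.
  by rewrite log2_2T; case: (J w == Jh w) => /=; ring.
by rewrite (PN_sum1 P_sum1); apply: Rplus_le_compat_l; apply: Rmult_le_compat_r.
Qed.

Section Decoding.
Variables (p : seq (step X n)) (J : T -> nat) (delta : R).
Variable Ji : forall i : 'I_m, {ffun 'I_n -> X i} -> seq nat -> nat.
Arguments Ji : clear implicits.
Hypothesis decoded :
  Prob P (fun w => [forall i, Ji i (obs i w) (transcript p w) == J w]) >= 1 - delta.
Let f := relf (transcript p).
Let j := relf J.

(* Fano's inequality at the terminal [i], which decodes [J] from [X_i] and [F]. *)
Lemma block_gain_le (A : {set 'I_m}) i : i \in A ->
  H (relI (relA A) (relI j f)) - H (relI (relA A) f) <= 1 + delta * (INR n * c).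
Proof.
move=> iA; have ef : is_equiv f := is_equiv_relf _.
pose g := relI (relf (obs i)) f.
have eg : is_equiv g by apply: is_equivI => //; exact: is_equiv_relf.
pose Jh w := Ji i (obs i w) (transcript p w).
apply: (Rle_trans _ (H (relI j g) - H g)).
  rewrite /Hn (@ent_ext _ _ (relI (relA A) (relI j f)) (relI j (relI (relA A) f))); last first.
    by move=> w w'; rewrite /relI andbCA.
  apply: (cond_ent_le_subrel Q_ge0) => //; first exact: is_equiv_relf.
    exact/is_equivI/ef/is_equiv_relA.
  by move=> w w' /andP [Aww' fww']; rewrite /g /relI fww' andbT /relf (relA_obs iA Aww').
have Jh_g w w' : g w w' -> Jh w = Jh w'.
  by move=> /andP [/eqP obs_ww' /eqP tr_ww']; rewrite /Jh obs_ww' tr_ww'.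
apply: (Rle_trans _ _ _ (fano_ineq Q_ge0 J eg Jh_g)).
by apply: (decoding_cost_le _ decoded) => w /forallP /(_ i) /eqP.
Qed.

Variable Pi : {set {set 'I_m}}.
Hypothesis Pi_cover : forall i, exists2 B, B \in Pi & i \in B.
Hypothesis Pi_nonempty : forall A, A \in Pi -> exists i, i \in A.

(* Interaction does not increase the excess, and each block gains at most
   [block_gain_le] from also conditioning on [J]. *)
Lemma excess_common_randomness :
  excess P Pi (relI j f) + (INR #|Pi| - 1) * (H (relI j f) - H f)
  <= INR n * (\big[Rplus/0]_(A in Pi) H1 P A - H1 P [set: 'I_m]) +
     INR #|Pi| * (1 + delta * (INR n * c)).
Proof.
have comm := excess_transcript P_ge0 Pi_cover p.
rewrite (excess_total P_ge0 P_sum1) -/f in comm.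
have join := excess_join P_ge0 Pi (is_equiv_relf J) (is_equiv_relf (transcript p)).
rewrite -/j -/f in join.
have gain : \big[Rplus/0]_(A in Pi) (H (relI (relA A) (relI j f)) - H (relI (relA A) f))
    <= \big[Rplus/0]_(A in Pi) (1 + delta * (INR n * c)).
  by apply: sum_le => A /Pi_nonempty [i iA]; apply: block_gain_le iA.
rewrite sum_const_set in gain.
set k := INR #|Pi| in join gain *.
set gain_sum := \big[Rplus/0]_(A in Pi) _ in join gain.
lra.
Qed.

End Decoding.

End CommonRandomnessBound.

(** * Minimizing partitions and asymptotics *)

Section Partitions.
Variable m : nat.
Implicit Type Pi : {set {set 'I_m}}.

Lemma validp_cover Pi : validp Pi -> forall i, exists2 B, B \in Pi & i \in B.
Proof.
case/andP => /and3P [/eqP cover_Pi _ _] _ i.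
have /bigcupP [B BPi iB] : i \in cover Pi by rewrite cover_Pi inE.
by exists B.
Qed.

Lemma validp_nonempty Pi : validp Pi -> forall A, A \in Pi -> exists i, i \in A.
Proof.
case/andP => /and3P [_ _ Pi0] _ A APi.
have /set0Pn [i iA] : A != set0 by apply: contraNneq Pi0 => <-.
by exists i.
Qed.

Lemma validp_card Pi : validp Pi -> (2 <= #|Pi|)%N.
Proof. by case/andP. Qed.

Lemma validp_Pfine : (2 <= m)%N -> validp (Pfine m).
Proof.
move=> m_ge2; apply/andP; split; last by rewrite card_imset ?cardsT ?card_ord //; exact: set1_inj.
apply/and3P; split.
- apply/eqP/setP => i; rewrite inE; apply/bigcupP; exists [set i]; last by rewrite inE.
  by apply/imsetP; exists i.
- apply/trivIsetP => _ _ /imsetP [i _ ->] /imsetP [j _ ->] neq_ij.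
  by rewrite disjoint_sym disjoints1 inE; apply: contraNneq neq_ij => ->.
- by apply/imsetP => -[i _ /setP /(_ i)]; rewrite !inE eqxx.
Qed.

End Partitions.

Lemma exists_minimizer (m : nat) (X : 'I_m -> finType) (P : Omega X -> R) :
  (2 <= m)%N -> exists Pi, validp Pi /\ Defs.Delta P Pi = Icap P.
Proof.
move=> m_ge2; rewrite /Icap; elim/big_ind: _.
- by exists (Pfine m); split => //; exact: validp_Pfine.
- move=> _ _ [Pi [vPi <-]] [Pi' [vPi' <-]].
  by rewrite /Rmin; case: Rle_dec => _; [exists Pi | exists Pi'].
- by move=> Pi vPi; exists Pi.
Qed.

Lemma bigmax_le (I : finType) (p : pred I) (t : I -> R) (M : R) :
  0 <= M -> (forall i, p i -> t i <= M) -> 0 <= \big[Rmax/0]_(i | p i) t i <= M.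
Proof.
move=> M_ge0 t_le; split.
  by elim/big_rec: _ => [|i y _ y_ge0]; [lra | apply: Rle_trans y_ge0 (Rmax_r _ _)].
by elim/big_rec: _ => // i y pi y_le; apply: Rmax_lub => //; apply: t_le.
Qed.

Lemma minimizer_common_randomness_bound (m : nat) (X : 'I_m -> finType) (P : Omega X -> R)
  (P_ge0 : forall x, 0 <= P x) (P_sum1 : \big[Rplus/0]_x P x = 1)
  (n : nat) (Pi : {set {set 'I_m}}) (p : seq (step X n)) (J : OmegaN X n -> nat)
  (delta : R) (Ji : forall i : 'I_m, {ffun 'I_n -> X i} -> seq nat -> nat) :
  validp Pi -> Defs.Delta P Pi <= Icap P -> 0 <= delta ->
  Prob P (fun w => [forall i, Ji i (obs i w) (transcript p w) == J w]) >= 1 - delta ->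
  / INR (#|Pi| - 1) * excess P Pi (relI (relf J) (relf (transcript p))) +
    (Hn P (relI (relf J) (relf (transcript p))) - Hn P (relf (transcript p)))
  <= INR n * Icap P + 2 * (1 + delta * (INR n * log2_card_Omega X)).
Proof.
move=> vPi Delta_le delta_ge0 decoded.
have := excess_common_randomness P_ge0 P_sum1 decoded (validp_cover vPi) (validp_nonempty vPi).
have k_ge2 : 2 <= INR #|Pi|.
  by apply: (Rle_trans _ (INR 2)); [simpl; lra | exact/le_INR/leP/validp_card].
rewrite INR_subn1; last exact: leq_trans (validp_card vPi).
have -> : \big[Rplus/0]_(A in Pi) H1 P A - H1 P [set: 'I_m] =
    (INR #|Pi| - 1) * Defs.Delta P Pi.
  by rewrite /Defs.Delta INR_subn1 ?(leq_trans _ (validp_card vPi)) //; field; lra.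
have u_ge1 : 1 <= 1 + delta * (INR n * log2_card_Omega X).
  suff : 0 <= delta * (INR n * log2_card_Omega X) by lra.
  apply: Rmult_le_pos => //; apply: Rmult_le_pos; first exact: pos_INR.
  exact: log2_card_Omega_ge0 P_sum1.
set k := INR #|Pi| in k_ge2 *; set u := 1 + _ in u_ge1 *.
set D := excess _ _ _; set h := Hn P _ - Hn P _ => bound.
have nDelta_le : (k - 1) * (INR n * Defs.Delta P Pi) <= (k - 1) * (INR n * Icap P).
  by apply: Rmult_le_compat_l; [lra | apply: Rmult_le_compat_l => //; apply: pos_INR].
have ku_le : k * u <= (k - 1) * (2 * u) by nra.
apply: (Rmult_le_reg_l (k - 1)); first lra.
rewrite Rmult_plus_distr_l -Rmult_assoc Rinv_r; lra.
Qed.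

Definition eventually (p : nat -> Prop) : Prop := exists N, forall n, (N <= n)%N -> p n.

Lemma eventually_and (p q : nat -> Prop) :
  eventually p -> eventually q -> eventually (fun n => p n /\ q n).
Proof.
move=> [N1 p_ev] [N2 q_ev]; exists (maxn N1 N2) => n; rewrite geq_max => /andP [? ?].
by split; [apply: p_ev | apply: q_ev].
Qed.

Lemma eventually_inv_lt e : 0 < e -> eventually (fun n => 1 <= INR n /\ / INR n < e).
Proof.
move=> e_gt0; have [N [inv_lt N_gt0]] := archimed_cor1 e e_gt0.
exists N => n N_le; have N_ge1 : 1 <= INR N := le_INR 1 N N_gt0.
have n_ge : INR N <= INR n by apply/le_INR/leP.
split; first lra.
by apply: Rle_lt_trans inv_lt; apply: Rinv_le_contravar; lra.
Qed.

Lemma exists_small_delta c e : 0 <= c -> 0 < e -> exists d, 0 < d < 1 /\ d * c <= e.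
Proof.
move=> c_ge0 e_gt0; exists (Rmin (1 / 2) (e / (c + 1))).
have frac_gt0 : 0 < e / (c + 1) by apply: Rdiv_lt_0_compat; lra.
split; first by split; [apply: Rmin_glb_lt | apply: Rle_lt_trans (Rmin_l _ _) _]; lra.
apply: (Rle_trans _ (e / (c + 1) * c)); first exact/Rmult_le_compat_r/Rmin_r.
have -> : e / (c + 1) * c = e - e / (c + 1) by field; lra.
lra.
Qed.

Lemma minimizerP (m : nat) (X : 'I_m -> finType) (P : Omega X -> R) Pi :
  minimizer P Pi -> validp Pi /\ Defs.Delta P Pi <= Icap P.
Proof. by case/andP => vPi; rewrite /Defs.Rleb; case: (Rle_dec _ _). Qed.

Lemma secret_key_common_information (m : nat) (X : 'I_m -> finType) (P : Omega X -> R)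
  (P_ge0 : forall x, 0 <= P x) (P_sum1 : \big[Rplus/0]_x P x = 1) F K :
  isSK P F K (Icap P) -> isCIW P (Lrel F K).
Proof.
move=> [K_CR K_secret] eps eps_gt0.
set c := log2_card_Omega X; have c_ge0 : 0 <= c := log2_card_Omega_ge0 P_sum1.
have eps8_gt0 : 0 < eps / 8 by lra.
set e := eps / 4; have e_gt0 : 0 < e by rewrite /e; lra.
have [d [d01 dc_le]] := exists_small_delta c_ge0 eps8_gt0.
have [N all_ev] := eventually_and (eventually_and (K_secret e e_gt0) (K_CR d d01))
  (eventually_inv_lt eps8_gt0).
exists N => n /leP N_le.
have [[[MI_le HK_ge] [Ji decoded]] [n_ge1 inv_n_lt]] := all_ev n N_le.
have HK_ge' : INR n * Icap P - INR n * e <= Hn P (relf (K n)).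
  have := Rmult_le_compat_l _ _ _ (pos_INR n) (Rge_le _ _ HK_ge).
  by rewrite -Rmult_assoc Rinv_r; lra.
set M := INR n * e + e + 2 * (1 + d * (INR n * c)).
have [cMI_ge0 cMI_le] : 0 <= condMI P (@Lrel _ _ F K n) <= M.
  apply: bigmax_le => [|Pi /minimizerP [vPi Delta_le]].
    have : 0 <= d * (INR n * c) by apply: Rmult_le_pos; [lra | nra].
    by rewrite /M; nra.
  have := minimizer_common_randomness_bound P_ge0 P_sum1 vPi Delta_le
    (Rlt_le _ _ (proj1 d01)) decoded.
  by move: MI_le; rewrite /MIn /excess /Lrel /M -/c; lra.
rewrite /R_dist Rminus_0_r Rabs_pos_eq; last by apply: Rmult_le_pos; [apply: Rinv_ge0 | ]; lra.
apply: (Rle_lt_trans _ (/ INR n * M)); first by apply: Rmult_le_compat_l; [apply: Rinv_ge0 |]; lra.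
have -> : / INR n * M = e + e * / INR n + 2 * / INR n + 2 * (d * c) by rewrite /M; field; lra.
have : e * / INR n <= e.
  rewrite -[X in _ <= X]Rmult_1_r; apply: Rmult_le_compat_l; first lra.
  by rewrite -Rinv_1; apply: Rinv_le_contravar; lra.
by rewrite /e in dc_le *; lra.
Qed.

Lemma common_randomness_entropy_rate (m : nat) (X : 'I_m -> finType) (P : Omega X -> R)
  (m_ge2 : (2 <= m)%N) (P_ge0 : forall x, 0 <= P x) (P_sum1 : \big[Rplus/0]_x P x = 1)
  F J (b : R) : rate_le F b -> isCR P F J -> forall eps, 0 < eps ->
  eventually (fun n => / INR n * Hn P (@Lrel _ _ F J n) <= b + Icap P + eps).
Proof.
move=> rate J_CR eps eps_gt0.
have [Pi [vPi Delta_eq]] := exists_minimizer P m_ge2.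
set c := log2_card_Omega X; have c_ge0 : 0 <= c := log2_card_Omega_ge0 P_sum1.
have eps8_gt0 : 0 < eps / 8 by lra.
set e := eps / 4; have e_gt0 : 0 < e by rewrite /e; lra.
have [d [d01 dc_le]] := exists_small_delta c_ge0 eps8_gt0.
have [N all_ev] := eventually_and (eventually_and (rate e e_gt0) (J_CR d d01))
  (eventually_inv_lt eps8_gt0).
exists N => n N_le; have [[log_le [Ji decoded]] [n_ge1 inv_n_lt]] := all_ev n N_le.
have := minimizer_common_randomness_bound P_ge0 P_sum1 vPi (Req_le _ _ Delta_eq)
  (Rlt_le _ _ (proj1 d01)) decoded.
have : 0 <= / INR (#|Pi| - 1) * excess P Pi (relI (relf (J n)) (relf (transcript (F n)))).
  apply: Rmult_le_pos; first exact/Rinv_ge0/pos_INR.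
  exact/(excess_ge0 P_ge0 (validp_cover vPi))/is_equivI/is_equiv_relf/is_equiv_relf.
have := ent_le_log2_card (PN_ge0 P_ge0 (n := n)) (transcript (F n)) (PN_sum1 P_sum1 n).
rewrite -/(Hn P _) -/(commSize (F n)) -/c.
set HF := Hn P _; set HJF := Hn P (@Lrel _ _ F J n); set L := log2 _ => HF_le excess_ge0' bound.
have HJF_le : HJF <= L + INR n * Icap P + 2 * (1 + d * (INR n * c)) by lra.
apply: (Rle_trans _ (/ INR n * (L + INR n * Icap P + 2 * (1 + d * (INR n * c))))).
  by apply: Rmult_le_compat_l => //; apply: Rinv_ge0; lra.
have -> : / INR n * (L + INR n * Icap P + 2 * (1 + d * (INR n * c))) =
  / INR n * L + Icap P + 2 * / INR n + 2 * (d * c) by field; lra.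
by rewrite /e in log_le; rewrite /L; lra.
Qed.

Unset Implicit Arguments.

Theorem theorem1 (m : nat) (X : 'I_m -> finType) (P : Omega X -> R)
  (hm : (2 <= m)%N)
  (hP0 : forall x, 0 <= P x)
  (hP1 : \big[Rplus/0]_(x : Omega X) P x = 1) :
  inf_le (CIcommSet P) (SKcommSet P) /\
  inf_le (fun x => exists c, CIrateSet P c /\ x = c - Icap P) (CIcommSet P).
Proof.
split=> b.
- move=> [b_ge0 [F [K [rate [K_CR K_secret]]]]] eps eps_gt0; exists b; split; last lra.
  split=> //; exists F, K; split=> //; split=> //.
  exact: (secret_key_common_information hP0 hP1 (conj K_CR K_secret)).
- move=> [b_ge0 [F [J [rate [J_CR J_CIW]]]]] eps eps_gt0; exists b; split; last lra.
  exists (b + Icap P); split; last ring.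
  exists F, J; split; first by split.
  move=> e e_gt0; have [N ev] := common_randomness_entropy_rate hm hP0 hP1 rate J_CR e_gt0.
  by exists N.
Qed.
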